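(* Let $\mathbb F$ be algebraically closed of characteristic $0$, let $V$ be a vector space over $\mathbb F$ of finite positive dimension, and let $A,A^*$ be a TD pair on $V$ of Krawtchouk type. Let $\dagger$ be the antiautomorphism of $\mathrm{End}(V)$ defined by $\langle Xu,v\rangle=\langle u,X^\dagger v\rangle$ for all $X\in\mathrm{End}(V)$, $u,v\in V$, where $\langle\,,\rangle$ is a nonzero bilinear form on $V$ satisfying $\langle Au,v\rangle=\langle u,Av\rangle$ and $\langle A^*u,v\rangle=\langle u,A^*v\rangle$ for all $u,v$ (such a form exists, is nondegenerate, and is unique up to a nonzero scalar, so $\dagger$ is well defined). Then $\dagger$ is the unique antiautomorphism of $\mathrm{End}(V)$ that fixes each of $A,A^*$. Moreover $X^{\dagger\dagger}=X$ for all $X\in\mathrm{End}(V)$.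
   Context: An antiautomorphism of $\mathrm{End}(V)$ is an $\mathbb F$-linear bijection $\varrho:\mathrm{End}(V)\to\mathrm{End}(V)$ with $(XY)^\varrho=Y^\varrho X^\varrho$. A TD pair on a finite-dimensional $\mathbb F$-vector space $V$ is an ordered pair $A,A^*$ of diagonalizable linear maps on $V$ such that for some ordering $V_0,\dots,V_d$ of the eigenspaces of $A$ one has $A^*V_i\subseteq V_{i-1}+V_i+V_{i+1}$ ($0\le i\le d$), for some ordering $V^*_0,\dots,V^*_\delta$ of the eigenspaces of $A^*$ one has $AV^*_i\subseteq V^*_{i-1}+V^*_i+V^*_{i+1}$ ($0\le i\le\delta$) (terms with out-of-range index are $0$), and no subspace $W\neq 0,V$ satisfies $AW\subseteq W$, $A^*W\subseteq W$. Such orderings are called standard; an ordering of eigenvalues is standard if the corresponding ordering of eigenspaces is. It is known that $d=\delta$ (the diameter). The TD pair has Krawtchouk type if the sequence $(d-2i)_{i=0}^d$ is a standard ordering of the eigenvalues of $A$ and also a standard ordering of the eigenvalues of $A^*$. *)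

(* Conventions: V = 'rV[F]_n (row vectors); a linear map X on V
   is a square matrix acting on the right, u |-> u *m X (MathComp's convention,
   matching mxalgebra's row spaces and [eigenspace]).  Subspaces of V are row
   spaces of matrices (mxalgebra, %MS). *)
From HB Require Import structures.
From mathcomp Require Import all_boot all_order all_algebra.
Set Implicit Arguments. Unset Strict Implicit. Unset Printing Implicit Defensive.
Import Order.TTheory GRing.Theory Num.Theory.
Local Open Scope ring_scope.

Section TD.
Variables (F : fieldType) (n : nat).

Definition esp (A : 'M[F]_n) (s : seq F) (i : nat) : 'M[F]_n :=
  if (i < size s)%N then eigenspace A s`_i else 0.

Definition esp3 (A : 'M[F]_n) (s : seq F) (i : nat) : 'M[F]_n :=
  ((if i is j.+1 then esp A s j else 0) + esp A s i + esp A s i.+1)%MS.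

Definition standard_ordering (A B : 'M[F]_n) (s : seq F) : Prop :=
  [/\ uniq s, (forall a, eigenvalue A a <-> a \in s) &
      forall i, (i < size s)%N -> (esp A s i *m B <= esp3 A s i)%MS].

Definition TD_pair (A As : 'M[F]_n) : Prop :=
  [/\ diagonalizable A, diagonalizable As,
      (exists s, standard_ordering A As s),
      (exists s, standard_ordering As A s) &
      forall W : 'M[F]_n, (W *m A <= W)%MS -> (W *m As <= W)%MS ->
        W = 0 \/ (1%:M <= W)%MS].

Definition krawtchouk_seq (d : nat) : seq F :=
  [seq (d%:R - (2 * i)%:R : F) | i <- iota 0 d.+1].

Definition Krawtchouk_TD_pair (A As : 'M[F]_n) : Prop :=
  TD_pair A As /\
  exists d : nat, standard_ordering A As (krawtchouk_seq d) /\
                  standard_ordering As A (krawtchouk_seq d).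

Definition bform (B : 'M[F]_n) (u v : 'rV[F]_n) : F := (u *m B *m v^T) 0 0.

(* antiautomorphism of End(V): F-linear bijection reversing products.
   (Matrices with *m form the opposite algebra of End(V) under the row
   convention; the antiautomorphism condition is invariant under this.) *)
Definition antiautomorphism (rho : 'M[F]_n -> 'M[F]_n) : Prop :=
  [/\ (forall (a : F) X Y, rho (a *: X + Y) = a *: rho X + rho Y),
      bijective rho &
      forall X Y, rho (X *m Y) = rho Y *m rho X].

Definition is_adjoint (B : 'M[F]_n) (dag : 'M[F]_n -> 'M[F]_n) : Prop :=
  forall X u v, bform B (u *m X) v = bform B u (v *m dag X).

End TD.

(* By Schur's lemma every matrix
   commuting with A and A* is scalar.  A nonzero B with A, A* symmetric for the
   form u B v^T is then invertible, because its kernel is invariant under the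
   pair, and the adjoint map X |-> (B^-1 X B)^T is an antiautomorphism fixing A
   and A*.  If rho and sigma are antiautomorphisms fixing A and A*, then
   sigma o rho is a nonzero algebra endomorphism of End(V) fixing A and A*; as
   for any such endomorphism s there is a nonzero S with X S = S s(X) for all X,
   Schur's lemma forces S to be scalar and s to be the identity.  Taking
   rho = sigma gives involutivity, and then injectivity of sigma gives
   rho = sigma. *)
From Stdlib Require Import FunctionalExtensionality.
From HB Require Import structures.
From mathcomp Require Import all_boot all_order all_algebra.
Import GRing.Theory.
Set Implicit Arguments. Unset Strict Implicit. Unset Printing Implicit Defensive.
Local Open Scope ring_scope.

Definition irreducible_pair (F : fieldType) (n : nat) (A As : 'M[F]_n) : Prop :=
  forall W : 'M[F]_n, (W *m A <= W)%MS -> (W *m As <= W)%MS ->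
    W = 0 \/ (1%:M <= W)%MS.

Lemma irreducible_pair_commute_scalar (F : closedFieldType) (n : nat)
    (A As S : 'M[F]_n.+1) :
  irreducible_pair A As -> A *m S = S *m A -> As *m S = S *m As ->
  exists l, S = l%:M.
Proof.
move=> irr hA hAs.
have [l hl] : exists l, eigenvalue S l.
  have /closed_rootP [l hl] : size (char_poly S) != 1 by rewrite size_char_poly.
  by exists l; rewrite eigenvalue_root_char.
have hE : eigenspace S l *m S = l *: eigenspace S l by apply/eigenspaceP.
have stable M : M *m S = S *m M -> (eigenspace S l *m M <= eigenspace S l)%MS.
  by move=> hM; apply/eigenspaceP; rewrite -mulmxA hM mulmxA hE scalemxAl.
case: (irr _ (stable _ hA) (stable _ hAs)) => [E0 | /eigenspaceP].
  by move: hl; rewrite /eigenvalue E0 eqxx.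
by rewrite mul1mx scalemx1 => ->; exists l.
Qed.

Section Intertwiner.
Variables (F : fieldType) (m : nat) (s : 'M[F]_m.+1 -> 'M[F]_m.+1).
Hypotheses (s_linear : linear s) (s_inj : injective s)
  (s_mul : forall X Y, s (X *m Y) = s X *m s Y).

(* The rows of the intertwiner are y s(e_{0i}), for a row y with y s(e_{00}) != 0. *)
Let phi (y : 'rV[F]_m.+1) (u : 'rV[F]_m.+1) : 'rV[F]_m.+1 :=
  y *m s ((delta_mx 0 0 : 'cV[F]_m.+1) *m u).

Let phi_linear y : linear (phi y).
Proof.
by move=> a u v; rewrite /phi mulmxDr -scalemxAr s_linear mulmxDr -scalemxAr.
Qed.

Let mul_lin1_phi y u : u *m lin1_mx (phi y) = phi y u.
Proof.
pose f : {linear 'rV[F]_m.+1 -> 'rV[F]_m.+1} :=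
  HB.pack (phi y) (GRing.isLinear.Build _ _ _ _ (phi y) (phi_linear y)).
exact: (mul_rV_lin1 f).
Qed.

Lemma intertwiner_exists :
  exists2 S : 'M[F]_m.+1, S != 0 & forall X, X *m S = S *m s X.
Proof.
have s0 : s 0 = 0.
  by have := s_linear (-1) 0 0; rewrite scaler0 addr0 scaleN1r addNr.
have sE : s (delta_mx 0 0) != 0.
  apply: contra_neq (@oner_neq0 F) => sE0.
  have /matrixP/(_ 0 0) := s_inj (etrans sE0 (esym s0)).
  by rewrite !mxE.
have [_ /submxP [y ->] ysE] := rowV0Pn sE.
exists (lin1_mx (phi y)).
  apply: contraNneq ysE => S0.
  by have := mul_lin1_phi y (delta_mx 0 0); rewrite S0 mulmx0 /phi mul_delta_mx => <-.
move=> X; apply/row_matrixP => i.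
by rewrite !rowE !mulmxA !mul_lin1_phi /phi !mulmxA s_mul mulmxA.
Qed.

End Intertwiner.

Lemma irreducible_pair_fixed_endo_id (F : closedFieldType) (n : nat)
    (A As : 'M[F]_n.+1) (s : 'M[F]_n.+1 -> 'M[F]_n.+1) :
  irreducible_pair A As -> linear s -> injective s ->
  (forall X Y, s (X *m Y) = s X *m s Y) ->
  s A = A -> s As = As -> forall X, s X = X.
Proof.
move=> irr s_linear s_inj s_mul sA sAs.
have [S S0 hS] := intertwiner_exists s_linear s_inj s_mul.
have [l defS] : exists l, S = l%:M.
  by apply: (irreducible_pair_commute_scalar irr); rewrite hS ?sA ?sAs.
have l0 : l != 0 by apply: contraNneq S0; rewrite defS => ->; rewrite raddf0.
move=> X; apply: (scalerI l0); have := hS X.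
by rewrite defS mul_mx_scalar mul_scalar_mx => ->.
Qed.

Section Antiautomorphisms.
Variables (F : closedFieldType) (n : nat) (A As : 'M[F]_n.+1).
Hypothesis irr : irreducible_pair A As.

Lemma antiautomorphism_comp_fixed_id (rho sigma : 'M[F]_n.+1 -> 'M[F]_n.+1) :
  antiautomorphism rho -> antiautomorphism sigma ->
  rho A = A -> rho As = As -> sigma A = A -> sigma As = As ->
  forall X, sigma (rho X) = X.
Proof.
move=> [rho_lin /bij_inj rho_inj rho_mul] [sigma_lin /bij_inj sigma_inj sigma_mul].
move=> rA rAs sA sAs.
apply: (irreducible_pair_fixed_endo_id irr); last 2 first.
- by rewrite rA sA.
- by rewrite rAs sAs.
- by move=> a X Y; rewrite rho_lin sigma_lin.
- exact: inj_comp.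
- by move=> X Y; rewrite rho_mul sigma_mul.
Qed.

Lemma antiautomorphism_fixed_involutive (sigma : 'M[F]_n.+1 -> 'M[F]_n.+1) :
  antiautomorphism sigma -> sigma A = A -> sigma As = As ->
  forall X, sigma (sigma X) = X.
Proof. by move=> anti sA sAs; apply: antiautomorphism_comp_fixed_id. Qed.

Lemma antiautomorphism_fixed_unique (rho sigma : 'M[F]_n.+1 -> 'M[F]_n.+1) :
  antiautomorphism rho -> antiautomorphism sigma ->
  rho A = A -> rho As = As -> sigma A = A -> sigma As = As -> rho = sigma.
Proof.
move=> rho_anti sigma_anti rA rAs sA sAs.
have [_ /bij_inj sigma_inj _] := sigma_anti.
apply: functional_extensionality => X; apply: sigma_inj.
rewrite (antiautomorphism_comp_fixed_id rho_anti sigma_anti) //.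
by rewrite (antiautomorphism_fixed_involutive sigma_anti).
Qed.

End Antiautomorphisms.

Lemma bform_inj (F : fieldType) (n : nat) (M N : 'M[F]_n) :
  (forall u v, bform M u v = bform N u v) -> M = N.
Proof.
move=> h; apply/matrixP => i j; have := h (delta_mx 0 i) (delta_mx 0 j).
by rewrite /bform trmx_delta -!rowE -!colE !mxE.
Qed.

Lemma bform_adjointE (F : fieldType) (n : nat) (B X Y : 'M[F]_n) :
  (forall u v, bform B (u *m X) v = bform B u (v *m Y)) -> X *m B = B *m Y^T.
Proof.
move=> h; apply: bform_inj => u v; have := h u v.
by rewrite /bform trmx_mul !mulmxA.
Qed.

Lemma irreducible_pair_symmetric_unitmx (F : fieldType) (n : nat)
    (A As B : 'M[F]_n) :
  irreducible_pair A As -> B != 0 ->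
  A *m B = B *m A^T -> As *m B = B *m As^T -> B \in unitmx.
Proof.
move=> irr B0 hA hAs.
have stable M : M *m B = B *m M^T -> (kermx B *m M <= kermx B)%MS.
  by move=> hM; rewrite sub_kermx -mulmxA hM mulmxA mulmx_ker mul0mx.
case: (irr _ (stable _ hA) (stable _ hAs)) => [/eqP|].
  by rewrite kermx_eq0 row_free_unit.
by rewrite sub_kermx mul1mx (negbTE B0).
Qed.

Section Adjoint.
Variables (F : fieldType) (n : nat) (B : 'M[F]_n).
Hypothesis B_unit : B \in unitmx.

Definition adjoint_mx (X : 'M[F]_n) : 'M[F]_n := (invmx B *m X *m B)^T.

Lemma adjoint_mxP : is_adjoint B adjoint_mx.
Proof. by move=> X u v; rewrite /bform /adjoint_mx trmx_mul trmxK !mulmxA mulmxK. Qed.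

Lemma adjoint_mx_fixed (M : 'M[F]_n) : M *m B = B *m M^T -> adjoint_mx M = M.
Proof. by move=> hM; rewrite /adjoint_mx -mulmxA hM mulKmx // trmxK. Qed.

Lemma is_adjointE (dag : 'M[F]_n -> 'M[F]_n) : is_adjoint B dag -> dag = adjoint_mx.
Proof.
move=> hdag; apply: functional_extensionality => X.
by rewrite /adjoint_mx -mulmxA (bform_adjointE (hdag X)) mulKmx // trmxK.
Qed.

Lemma adjoint_mx_antiautomorphism : antiautomorphism adjoint_mx.
Proof.
split.
- move=> a X Y; rewrite /adjoint_mx mulmxDr mulmxDl -scalemxAr -scalemxAl.
  exact: linearP.
- exists (fun Y => B *m Y^T *m invmx B) => [X|Y]; rewrite /adjoint_mx.
    by rewrite trmxK !mulmxA mulmxK // mulmxV // mul1mx.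
  by rewrite !mulmxA mulmxKV // mulVmx // mul1mx trmxK.
- by move=> X Y; rewrite /adjoint_mx -trmx_mul !mulmxA mulmxK.
Qed.

End Adjoint.

Theorem theorem10p2 (F : closedFieldType) (charF0 : [pchar F] =i pred0)
  (n : nat) (A As : 'M[F]_n.+1) :
  Krawtchouk_TD_pair A As ->
  forall B : 'M[F]_n.+1, B != 0 ->
  (forall u v, bform B (u *m A) v = bform B u (v *m A)) ->
  (forall u v, bform B (u *m As) v = bform B u (v *m As)) ->
  (exists dag, is_adjoint B dag) /\
  (forall dag, is_adjoint B dag ->
     [/\ antiautomorphism dag, dag A = A, dag As = As,
         (forall rho, antiautomorphism rho -> rho A = A -> rho As = As ->
            rho = dag)
       & forall X, dag (dag X) = X]).
Proof.
move=> [[_ _ _ _ irr] _] B B0 hA hAs.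
have AB := bform_adjointE hA; have AsB := bform_adjointE hAs.
have B_unit := irreducible_pair_symmetric_unitmx irr B0 AB AsB.
have dagA := adjoint_mx_fixed B_unit AB; have dagAs := adjoint_mx_fixed B_unit AsB.
have dag_anti := adjoint_mx_antiautomorphism B_unit.
split; first by exists (adjoint_mx B); apply: adjoint_mxP.
move=> dag /(is_adjointE B_unit) ->; split=> //.
  by move=> rho rho_anti rA rAs; apply: (antiautomorphism_fixed_unique irr).
exact: (antiautomorphism_fixed_involutive irr).
Qed.
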